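(* For every Dirichlet character $\chi$ modulo $d\ge1$ one has $|A_\chi|\le1$, with equality if and only if $\chi$ is the principal character modulo $d$ (in which case $A_\chi=1$).
   Context: For a Dirichlet character $\chi$, $A_\chi=\prod_{p:\ \chi(p)\neq0}\Bigl(1+\frac{(\chi(p)-1)p}{(p^2-\chi(p))(p-1)}\Bigr)$, the product running over primes $p$ (it converges absolutely). *)

From HB Require Import structures.
From mathcomp Require Import all_boot all_order all_algebra.
From mathcomp Require Import all_classical all_reals all_analysis.
From mathcomp Require Import complex.
Set Implicit Arguments. Unset Strict Implicit. Unset Printing Implicit Defensive.
Import Order.TTheory GRing.Theory Num.Theory.
Import numFieldTopology.Exports numFieldNormedType.Exports.
Local Open Scope ring_scope.
Local Open Scope complex_scope.
Local Open Scope classical_set_scope.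

HB.instance Definition _ (R : rcfType) := PseudoPointedMetric.copy R[i] R[i]^o.
HB.instance Definition _ (R : rcfType) := NormedModule.copy R[i] R[i]^o.

Definition dirichlet_char (R : rcfType) (d : nat) (chi : nat -> R[i]) : Prop :=
  [/\ (forall n : nat, chi (n + d)%N = chi n),
      (forall m n : nat, chi (m * n)%N = chi m * chi n) &
      (forall n : nat, (chi n != 0) = coprime n d)].

Definition principal_char (R : rcfType) (d : nat) : nat -> R[i] :=
  fun n => if coprime n d then 1 else 0.

Definition euler_factor (R : rcfType) (chi : nat -> R[i]) (p : nat) : R[i] :=
  1 + (chi p - 1) * p%:R / ((p%:R ^+ 2 - chi p) * (p%:R - 1)).

Definition A_partial (R : rcfType) (chi : nat -> R[i]) (n : nat) : R[i] :=
  \prod_(p < n | prime p && (chi p != 0)) euler_factor chi p.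

Definition A_chi (R : realType) (chi : nat -> R[i]) : R[i] :=
  lim (A_partial chi @ \oo).

From HB Require Import structures.
From mathcomp Require Import all_boot all_order all_algebra.
From mathcomp Require Import all_classical all_reals all_analysis.
From mathcomp Require Import complex cyclic.
From mathcomp Require Import lra ring zify.
Import Order.TTheory GRing.Theory Num.Theory.
Import numFieldTopology.Exports numFieldNormedType.Exports.
Local Open Scope ring_scope.
Local Open Scope complex_scope.
Local Open Scope classical_set_scope.
Import Normc.

(* Write c = chi p, of modulus 1 when chi p <> 0.  The Euler factor at p is
   N / D with D = (p^2 - c)(p - 1) and N = D + (c - 1) p, and
   |D|^2 - |N|^2 = 2 (p^4 - p^3 - p) (1 - Re c) >= 0, with equality only for
   c = 1: every factor has modulus at most 1, and modulus 1 only when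
   chi p = 1.  Moreover |factor - 1| <= 4 / (p (p - 1)) = 4 / (p - 1) - 4 / p,
   so the partial products, all of modulus at most 1, form a Cauchy sequence
   whose limit A_chi has modulus at most 1.  If chi is principal, every factor
   is 1.  Otherwise some prime q has chi q outside {0, 1}, and all partial
   products beyond q are bounded by the modulus of the q-th factor, which is
   less than 1. *)

Set Implicit Arguments. Unset Strict Implicit. Unset Printing Implicit Defensive.

Section ComplexModulus.
Variable R : rcfType.

Lemma normc_ge0 (z : R[i]) : 0 <= normc z.
Proof. by case: z => x y; exact: sqrtr_ge0. Qed.

Lemma normc_sqrE (z : R[i]) : normc z ^+ 2 = complex.Re z ^+ 2 + complex.Im z ^+ 2.
Proof. by case: z => x y; rewrite /= sqr_sqrtr // addr_ge0 ?sqr_ge0. Qed.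

Lemma normc_ge_Re (z : R[i]) : `|complex.Re z| <= normc z.
Proof.
rewrite -ler_sqr ?nnegrE ?normc_ge0 // normc_sqrE.
by rewrite real_normK ?num_real // lerDl sqr_ge0.
Qed.

Lemma normc_ge_Im (z : R[i]) : `|complex.Im z| <= normc z.
Proof.
rewrite -ler_sqr ?nnegrE ?normc_ge0 // normc_sqrE.
by rewrite real_normK ?num_real // lerDr sqr_ge0.
Qed.

Lemma normc_le_add (x y : R) : normc (x +i* y) <= `|x| + `|y|.
Proof.
rewrite -ler_sqr ?nnegrE ?normc_ge0 ?addr_ge0 // normc_sqrE /= sqrrD.
have := mulr_ge0 (normr_ge0 x) (normr_ge0 y).
by rewrite !real_normK ?num_real //; lra.
Qed.

Lemma normc_real (x : R) : normc x%:C = `|x|.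
Proof. by rewrite /= expr0n addr0 sqrtr_sqr. Qed.

Lemma normc_prod_le1 (I : finType) (Q : pred I) (F : I -> R[i]) :
  (forall i, Q i -> normc (F i) <= 1) -> normc (\prod_(i | Q i) F i) <= 1.
Proof.
move=> F_le1; apply: (big_ind (fun x => normc x <= 1)); rewrite ?normc1 //.
by move=> x y x_le1 y_le1; rewrite normcM mulr_ile1 ?normc_ge0.
Qed.

Lemma normc_telescope (u e : nat -> R[i]) (f : nat -> R) (n : nat) :
  (forall m, u m.+1 = u m * e m) -> (forall m, normc (u m) <= 1) ->
  (forall m, (n <= m)%N -> normc (e m - 1) <= f m - f m.+1) ->
  forall k, normc (u (n + k)%N - u n) <= f n - f (n + k)%N.
Proof.
move=> uS u_le1 e_le k; elim: k => [|k IH]; first by rewrite addn0 !subrr normc0.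
have -> : u (n + k.+1)%N - u n =
    (u (n + k)%N - u n) + u (n + k)%N * (e (n + k)%N - 1).
  by rewrite addnS uS; ring.
apply: (le_trans (le_normcD _ _)); rewrite normcM.
have e_nk := e_le _ (leq_addr k n).
have : normc (u (n + k)%N) * normc (e (n + k)%N - 1) <= f (n + k)%N - f (n + k).+1.
  by apply: le_trans e_nk; rewrite ler_piMl ?normc_ge0.
by rewrite addnS; move: IH; lra.
Qed.

End ComplexModulus.

Section EulerFactor.
Variable R : rcfType.

Let denom (c : R[i]) (P : R) := (P%:C ^+ 2 - c) * (P%:C - 1).

Lemma normc_euler_denom_sqr a b P :
  normc (denom (a +i* b) P) ^+ 2 = ((P ^+ 2 - a) ^+ 2 + b ^+ 2) * (P - 1) ^+ 2.
Proof. by rewrite normc_sqrE /denom /=; ring. Qed.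

Lemma normc_euler_num_sqr a b P :
  normc (denom (a +i* b) P + (a +i* b - 1) * P%:C) ^+ 2 =
  (P ^+ 3 - P ^+ 2 - P + a) ^+ 2 + b ^+ 2.
Proof. by rewrite normc_sqrE /denom /=; congr (_ + _); ring. Qed.

Lemma normc_euler_denom_ge a b P : a ^+ 2 + b ^+ 2 = 1 -> 2 <= P ->
  (P ^+ 2 - 1) * (P - 1) <= normc (denom (a +i* b) P).
Proof.
move=> ab1 P2; rewrite -ler_sqr ?nnegrE ?normc_ge0 //; last by nra.
rewrite normc_euler_denom_sqr -subr_ge0.
have -> : ((P ^+ 2 - a) ^+ 2 + b ^+ 2) * (P - 1) ^+ 2
    - ((P ^+ 2 - 1) * (P - 1)) ^+ 2 = 2 * (P * (P - 1)) ^+ 2 * (1 - a).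
  by rewrite (_ : b ^+ 2 = 1 - a ^+ 2); [ring | lra].
apply: mulr_ge0; [by rewrite mulr_ge0 ?sqr_ge0 | nra].
Qed.

Lemma normc_euler_denom_sqr_sub_num a b P : a ^+ 2 + b ^+ 2 = 1 ->
  normc (denom (a +i* b) P) ^+ 2
    - normc (denom (a +i* b) P + (a +i* b - 1) * P%:C) ^+ 2
  = 2 * (P ^+ 4 - P ^+ 3 - P) * (1 - a).
Proof.
move=> ab1; rewrite normc_euler_denom_sqr normc_euler_num_sqr.
by rewrite (_ : b ^+ 2 = 1 - a ^+ 2); [ring | lra].
Qed.

Lemma euler_term_bounds (c : R[i]) (P : R) : normc c = 1 -> 2 <= P ->
  let e := 1 + (c - 1) * P%:C / denom c P in
  [/\ normc e <= 1, (normc e = 1 -> c = 1) & normc (e - 1) <= 4 / (P * (P - 1))].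
Proof.
case: c => a b c1 P2 e.
have ab1 : a ^+ 2 + b ^+ 2 = 1 by move: (normc_sqrE (a +i* b)); rewrite c1 expr1n.
have D_ge := normc_euler_denom_ge ab1 P2.
have D_gt0 : 0 < normc (denom (a +i* b) P) by apply: lt_le_trans D_ge; nra.
have D_neq0 : denom (a +i* b) P != 0.
  by apply: contraTneq D_gt0 => ->; rewrite normc0 ltxx.
have sqr_sub := normc_euler_denom_sqr_sub_num P ab1.
have K_gt0 : 0 < P ^+ 4 - P ^+ 3 - P by nra.
have eE : e = (denom (a +i* b) P + (a +i* b - 1) * P%:C) / denom (a +i* b) P.
  by rewrite mulrDl divff.
split.
- rewrite eE normcM normcV ler_pdivrMr // mul1r.
  rewrite -ler_sqr ?nnegrE ?normc_ge0 // -subr_ge0 sqr_sub.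
  by apply: mulr_ge0; [rewrite mulr_ge0 // ltW | nra].
- rewrite eE normcM normcV => /divr1_eq /eqP.
  rewrite -(eqrXn2 (n := 2)) ?normc_ge0 // eq_sym.
  rewrite -subr_eq0 sqr_sub mulf_eq0 mulf_eq0 pnatr_eq0 (gt_eqF K_gt0) /=.
  rewrite subr_eq0 => /eqP a1; move: ab1; rewrite -a1 expr1n => /eqP.
  by rewrite addrC -subr_eq0 addrK sqrf_eq0 => /eqP ->.
- have normc_num_le : normc ((a +i* b - 1) * P%:C) <= 2 * P.
    rewrite normcM normc_real ger0_norm ?ler_wpM2r //; try lra.
    by rewrite (le_trans (le_normcD _ _)) // normcN normc1 c1.
  rewrite /e addrAC subrr add0r normcM normcV.
  rewrite ler_pdivrMr //; apply: (le_trans normc_num_le).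
  apply: le_trans (ler_wpM2l _ D_ge); last by rewrite divr_ge0 // mulr_ge0; lra.
  by rewrite mulrAC ler_pdivlMr; nra.
Qed.

Lemma euler_factor_bounds (chi : nat -> R[i]) (p : nat) :
  (1 < p)%N -> normc (chi p) = 1 ->
  [/\ normc (euler_factor chi p) <= 1,
      (normc (euler_factor chi p) = 1 -> chi p = 1) &
      normc (euler_factor chi p - 1) <= 4 / (p%:R * (p%:R - 1))].
Proof.
move=> p_gt1 chi_p1.
have -> : euler_factor chi p = 1 + (chi p - 1) * (p%:R : R)%:C / denom (chi p) p%:R.
  by rewrite /euler_factor /denom rmorph_nat.
by apply: euler_term_bounds; rewrite // (ler_nat R 2).
Qed.

End EulerFactor.

Section DirichletCharacter.
Variables (R : rcfType) (d : nat) (chi : nat -> R[i]).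
Hypothesis chi_char : dirichlet_char d chi.

Lemma chi_addmul m k : chi (m + k * d)%N = chi m.
Proof.
case: chi_char => periodic _ _; elim: k => [|k IH]; first by rewrite addn0.
by rewrite mulSn addnCA addnC periodic IH.
Qed.

Lemma chi_modn m : chi (m %% d)%N = chi m.
Proof. by rewrite {2}(divn_eq m d) addnC chi_addmul. Qed.

Lemma chi1 : chi 1%N = 1.
Proof.
case: chi_char => _ chiM chi_neq0.
have chi1_neq0 : chi 1%N != 0 by rewrite chi_neq0 coprime1n.
by apply: (mulfI chi1_neq0); rewrite -chiM mulr1.
Qed.

Lemma chi_expn n k : chi (n ^ k)%N = chi n ^+ k.
Proof.
case: chi_char => _ chiM _; elim: k => [|k IH]; first by rewrite chi1.
by rewrite expnS chiM IH exprS.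
Qed.

Lemma chi_eq0 n : ~~ coprime n d -> chi n = 0.
Proof. by case: chi_char => _ _ chi_neq0; rewrite -chi_neq0 negbK => /eqP. Qed.

Lemma normc_chi n : (0 < d)%N -> coprime n d -> normc (chi n) = 1.
Proof.
move=> d_gt0 co_nd.
have chi_totient : chi n ^+ totient d = 1.
  by rewrite -chi_expn -chi_modn Euler_exp_totient // chi_modn chi1.
have : `|chi n| ^+ totient d = 1 by rewrite -normrX chi_totient normr1.
move/eqP; rewrite pexpr_eq1 ?totient_gt0 // => /eqP.
by case: (chi n) => x y [].
Qed.

Lemma chi_eq_principal : (forall q, prime q -> chi q != 0 -> chi q = 1) ->
  chi = principal_char R d.
Proof.
case: chi_char => _ chiM chi_neq0 chi_primes; apply: funext => n.
rewrite /principal_char; case: ifPn => [|/chi_eq0 //].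
elim/ltn_ind: n => n IH co_nd.
have [n_gt1|] := ltnP 1 n.
  have q_prime := pdiv_prime n_gt1.
  have q_dvd := pdiv_dvd n.
  have co_rd : coprime (n %/ pdiv n) d := coprime_dvdl (dvdn_div q_dvd) co_nd.
  rewrite -(divnK q_dvd) chiM (chi_primes (pdiv n)) ?chi_neq0 ?(coprime_dvdl q_dvd) //.
  by rewrite IH ?mulr1 // ltn_Pdiv ?prime_gt1 //; lia.
case: n {IH} co_nd => [|[|//]] co_nd _; last exact: chi1.
move: co_nd; rewrite /coprime gcd0n => /eqP d1.
by rewrite -(chi_addmul 0 1) d1 chi1.
Qed.

End DirichletCharacter.

Section PartialProducts.
Variable R : rcfType.

Lemma A_partial_succ (chi : nat -> R[i]) n : A_partial chi n.+1 =
  A_partial chi n * (if prime n && (chi n != 0) then euler_factor chi n else 1).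
Proof. by rewrite /A_partial big_mkcond big_ord_recr /= -big_mkcond. Qed.

Variables (d : nat) (chi : nat -> R[i]).
Hypotheses (d_gt0 : (0 < d)%N) (chi_char : dirichlet_char d chi).

Lemma euler_factor_chi_bounds p : prime p -> chi p != 0 ->
  [/\ normc (euler_factor chi p) <= 1,
      (normc (euler_factor chi p) = 1 -> chi p = 1) &
      normc (euler_factor chi p - 1) <= 4 / (p%:R * (p%:R - 1))].
Proof.
move=> p_prime chi_p; apply: euler_factor_bounds; first exact: prime_gt1.
by apply: (normc_chi chi_char d_gt0); case: chi_char chi_p => _ _ ->.
Qed.

Lemma normc_A_partial_le1 n : normc (A_partial chi n) <= 1.
Proof.
apply: normc_prod_le1 => p /andP[p_prime chi_p].
by case: (euler_factor_chi_bounds p_prime chi_p).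
Qed.

Lemma normc_A_partial_sub_le m n : (2 <= n <= m)%N ->
  normc (A_partial chi m - A_partial chi n) <= 4 / (n%:R - 1).
Proof.
move=> /andP[n_ge2 n_le_m]; rewrite -(subnKC n_le_m).
pose f k : R := 4 / (k%:R - 1).
have telescope := normc_telescope (f := f) (A_partial_succ chi) normc_A_partial_le1.
apply: le_trans (telescope n _ _) _.
- move=> k n_le_k; have k_ge2 : (2 : R) <= k%:R by rewrite (ler_nat R 2); lia.
  have -> : f k - f k.+1 = 4 / (k%:R * (k%:R - 1)).
    rewrite /f -[k.+1%:R]natr1 addrK; field.
    by rewrite subr_eq0 !gt_eqF //; lra.
  case: ifP => [/andP[k_prime chi_k]|_].
    by case: (euler_factor_chi_bounds k_prime chi_k).
  by rewrite subrr normc0 divr_ge0 // mulr_ge0 //; lra.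
- rewrite /f gerBl // divr_ge0 // subr_ge0 (ler_nat R 1); lia.
Qed.

End PartialProducts.

Section ComplexLimits.
Variable R : realType.
Implicit Types (u : nat -> R[i]) (L : R[i]).

Lemma norm_complexE (z : R[i]) : `|z| = (normc z)%:C.
Proof. by case: z. Qed.

Lemma cvg_normcP u L :
  u @ \oo --> L <-> forall e : R, 0 < e -> \forall n \near \oo, normc (L - u n) < e.
Proof.
split => [/cvgrPdist_lt u_L e e_gt0|u_L].
  by apply: filterS (u_L e%:C _) => [n|]; rewrite ?ltcR // norm_complexE ltcR.
apply/cvgrPdist_lt => -[e e']; rewrite ltcE /= => /andP[/eqP e'0 e_gt0].
by apply: filterS (u_L e e_gt0) => n; rewrite norm_complexE e'0 ltcR.
Qed.

Lemma normc_lim_le u L (r : R) :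
  u @ \oo --> L -> (\forall n \near \oo, normc (u n) <= r) -> normc L <= r.
Proof.
move=> /cvg_normcP u_L [N _ u_le]; apply/ler_addgt0Pr => e e_gt0.
have [M _ u_near] := u_L e e_gt0.
have u_MN := u_le _ (leq_maxr M N); have L_MN := u_near _ (leq_maxl M N).
have := le_normcD (L - u (maxn M N)) (u (maxn M N)); rewrite subrK.
by move: u_MN L_MN => /=; lra.
Qed.

(* [R[i]] carries no complete-space structure, so the Cauchy criterion is
   applied to the real and imaginary parts separately. *)
Lemma complex_cauchy_cvg u :
  (forall e : R, 0 < e -> exists N, forall n, (N <= n)%N -> normc (u n - u N) < e) ->
  cvg (u @ \oo).
Proof.
move=> u_cauchy.
have component_cvg (f : R[i] -> R) : (forall z, `|f z| <= normc z) ->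
    (forall z w, f (z - w) = f z - f w) -> cvg ((f \o u) @ \oo).
  move=> f_le fB; apply: cauchy_cvg; apply: cauchy_exP => e e_gt0.
  have [N u_N] := u_cauchy e e_gt0.
  exists (f (u N)); exists N => // n /= N_le_n.
  rewrite -ball_normE /ball_ /= -fB (le_lt_trans (f_le _)) //.
  by rewrite -normcN opprB u_N.
have ReB (z w : R[i]) : complex.Re (z - w) = complex.Re z - complex.Re w.
  by case: z; case: w.
have ImB (z w : R[i]) : complex.Im (z - w) = complex.Im z - complex.Im w.
  by case: z; case: w.
have /cvg_ex[a u_a] := component_cvg _ (@normc_ge_Re R) ReB.
have /cvg_ex[b u_b] := component_cvg _ (@normc_ge_Im R) ImB.
apply: (cvgP (a +i* b)); apply/cvg_normcP => e e_gt0.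
have e2_gt0 : 0 < e / 2 by rewrite divr_gt0.
move/cvgrPdist_lt: u_a => /(_ _ e2_gt0) u_a.
move/cvgrPdist_lt: u_b => /(_ _ e2_gt0) u_b.
near=> n.
have Re_near : `|a - complex.Re (u n)| < e / 2 by near: n.
have Im_near : `|b - complex.Im (u n)| < e / 2 by near: n.
have -> : a +i* b - u n = (a - complex.Re (u n)) +i* (b - complex.Im (u n)).
  by case: (u n).
by apply: (le_lt_trans (normc_le_add _ _)); lra.
Unshelve. all: by end_near.
Qed.
End ComplexLimits.

Section EulerProduct.
Variables (R : realType) (d : nat) (chi : nat -> R[i]).
Hypotheses (d_gt0 : (0 < d)%N) (chi_char : dirichlet_char d chi).

Lemma A_partial_cvg : A_partial chi @ \oo --> A_chi chi.
Proof.
apply: complex_cauchy_cvg => e e_gt0.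
have e4_gt0 : 0 < e / 4 by rewrite divr_gt0.
have [N _ /(_ N (leqnn N)) N_small] := near_infty_natSinv_lt (PosNum e4_gt0).
exists N.+2 => n N_le_n.
apply: le_lt_trans (normc_A_partial_sub_le d_gt0 chi_char _) _; first by rewrite N_le_n.
by rewrite -[N.+2%:R]natr1 addrK mulrC -ltr_pdivlMr.
Qed.

Lemma normc_A_chi_le1 : normc (A_chi chi) <= 1.
Proof.
apply: normc_lim_le A_partial_cvg _.
by near=> n; exact: (normc_A_partial_le1 d_gt0 chi_char).
Unshelve. all: by end_near.
Qed.

Lemma A_chi_principal : chi = principal_char R d -> A_chi chi = 1.
Proof.
move=> chi_principal.
rewrite /A_chi; have -> : A_partial chi = fun=> 1.
  apply: funext => n; apply: big1 => p /andP[_].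
  rewrite /euler_factor chi_principal /principal_char.
  by case: ifP; rewrite ?eqxx // subrr !mul0r addr0.
exact: lim_cst.
Qed.

Lemma normc_A_partial_le_factor q n : prime q -> chi q != 0 -> (q < n)%N ->
  normc (A_partial chi n) <= normc (euler_factor chi q).
Proof.
move=> q_prime chi_q q_lt_n.
rewrite /A_partial (bigD1 (Ordinal q_lt_n)) /= ?q_prime ?chi_q // normcM.
rewrite ler_piMr ?normc_ge0 //; apply: normc_prod_le1 => p /andP[/andP[p_prime chi_p] _].
by case: (euler_factor_chi_bounds d_gt0 chi_char p_prime chi_p).
Qed.

Lemma normc_A_chi_lt1 : chi <> principal_char R d -> normc (A_chi chi) < 1.
Proof.
move=> chi_nonprincipal.
have [q [q_prime chi_q chi_q_neq1]] : exists q, [/\ prime q, chi q != 0 & chi q != 1].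
  apply/not_existsP => chi_primes; apply/chi_nonprincipal/(chi_eq_principal chi_char).
  move=> q q_prime chi_q; apply/eqP; apply/negPn/negP => chi_q_neq1.
  by apply: (chi_primes q); split.
have [factor_le1 factor_eq1 _] := euler_factor_chi_bounds d_gt0 chi_char q_prime chi_q.
have factor_lt1 : normc (euler_factor chi q) < 1.
  by rewrite lt_neqAle factor_le1 andbT; apply: contra chi_q_neq1 => /eqP/factor_eq1 ->.
apply: le_lt_trans factor_lt1; apply: normc_lim_le A_partial_cvg _.
by near=> n; apply: normc_A_partial_le_factor => //; near: n; exists q.+1.
Unshelve. all: by end_near.
Qed.

End EulerProduct.

Theorem mainTheorem14 (R : realType) (d : nat) (chi : nat -> R[i]) :
  (0 < d)%N -> dirichlet_char d chi ->
  [/\ cvg (A_partial chi @ \oo),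
      `|A_chi chi| <= 1,
      (`|A_chi chi| = 1 <-> chi = principal_char R d) &
      (chi = principal_char R d -> A_chi chi = 1)].
Proof.
move=> d_gt0 chi_char.
rewrite norm_complexE lecR; split.
- exact: (A_partial_cvg d_gt0 chi_char).
- exact: (normc_A_chi_le1 d_gt0 chi_char).
- split => [|/A_chi_principal ->]; last by rewrite normc1.
  move=> /complexI normc_A1; apply/not_notP => chi_nonprincipal.
  by move: (normc_A_chi_lt1 d_gt0 chi_char chi_nonprincipal); rewrite normc_A1 ltxx.
- exact: A_chi_principal.
Qed.
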